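(* Let $0<\alpha<1$, $m>1$, and let $a=\alpha/m$, $b=B=\alpha$, $A=1-\frac{m-1}{m}\alpha$, $F(z,s)=(m+1)\big(B(1-s)+(A+B)(z-s)\big)$ and $$K(z,u)=\frac{1}{\Gamma(1-\alpha)}\int_{\left(\frac{1-z}{1-u}\right)^{1/b}}^{1} F\big(z,\,1-s^{b}(1-u)\big)\,(1-s)^{-\alpha}\,s^{a+b}\,ds,\qquad 0\le u\le z<1 .$$ Then for every $X\in(0,1)$ there exist constants $0<K_-\le K_+$ (depending on $\alpha,m,X$) such that $$K_-\,(z-u)^{1-\alpha}\le K(z,u)\le K_+\,(z-u)^{1-\alpha}\qquad\text{for all } 0\le u\le z\le X .$$
   Context: This is the kernel of the Volterra equation $y(z)^{m+1}=\int_0^z K(z,u)y(u)\,du$ to which self-similar solutions $u(x,t)=t^{a}U(xt^{-b})$ of $\partial_t^\alpha u=(u^mu_x)_x$ with the Robin condition $u^mu_x(0,t)=-u(0,t)$ reduce. *)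

From HB Require Import structures.
From mathcomp Require Import all_boot all_order all_algebra.
From mathcomp Require Import all_classical all_reals all_analysis.
Set Implicit Arguments. Unset Strict Implicit. Unset Printing Implicit Defensive.
Import Order.TTheory GRing.Theory Num.Theory.
Local Open Scope classical_set_scope.
Local Open Scope ring_scope.

Definition GammaR {R : realType} (x : R) : R :=
  Rintegral lebesgue_measure `[0%R, +oo[%classic
    (fun t : R => t `^ (x - 1) * expR (- t)).

Definition Fker {R : realType} (al m z s : R) : R :=
  let B := al in let A := 1 - (m - 1) / m * al in
  (m + 1) * (B * (1 - s) + (A + B) * (z - s)).

Definition Kker {R : realType} (al m z u : R) : R :=
  let a := al / m in let b := al in
  (GammaR (1 - al))^-1 *
  Rintegral lebesgue_measure `[((1 - z) / (1 - u)) `^ (1 / b), 1]%classic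
    (fun s : R => Fker al m z (1 - s `^ b * (1 - u)) * (1 - s) `^ (- al)
                  * s `^ (a + b)).

(* Put c := ((1 - z) / (1 - u))^(1/al), the lower limit of the integral.
   For c <= s <= 1 the argument 1 - s^al (1 - u) of F stays in [u, z], so F
   is pinched between (m+1) al (1 - X) and (m+1) (1 + 2 al), while s^(a+b)
   lies between ((1 - X)^(1/al))^(a+b) and 1.  Hence the integral is
   comparable to the integral of (1 - s)^(-al) over [c, 1], which lies between
   (1 - c)^(1-al) and (1 - c)^(1-al) / (1 - al).  Finally 1 - c is comparable
   to z - u: c <= (1 - z) / (1 - u) gives 1 - c >= z - u, and
   1 + x <= exp x applied to c = exp (ln r / al) gives
   1 - c <= (z - u) / (al (1 - X)).  The factor 1 / Gamma(1 - al) only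
   contributes constants, since e^(-1) <= Gamma(1 - al) <= 1/(1 - al) + 1. *)

From HB Require Import structures.
From mathcomp Require Import all_boot all_order all_algebra.
From mathcomp Require Import all_classical all_reals all_analysis.
From mathcomp Require Import measurable_realfun ring lra.
Import Order.TTheory GRing.Theory Num.Theory.
Import numFieldNormedType.Exports.
Local Open Scope classical_set_scope.
Local Open Scope ring_scope.
Set Implicit Arguments. Unset Strict Implicit. Unset Printing Implicit Defensive.

Section exhaustion.
Context d (T : measurableType d) (R : realType) (mu : {measure set T -> \bar R}).
Local Open Scope ereal_scope.

Lemma ge0_nondecreasing_set_integral_le (F : (set T)^nat) (f : T -> \bar R)
    (M : \bar R) :
  nondecreasing_seq F -> (forall n, measurable (F n)) ->
  (forall n, measurable_fun (F n) f) -> (forall n x, F n x -> 0 <= f x) ->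
  (\forall n \near \oo, \int[mu]_(x in F n) f x <= M) ->
  \int[mu]_(x in \bigcup_n F n) f x <= M.
Proof.
move=> ndF mF mf f0 FM.
have cvF := @ge0_nondecreasing_set_cvg_integral _ _ _ F f mu ndF mF mf f0.
by rewrite -(cvg_lim _ cvF) //; apply: lime_le => //; apply/cvg_ex; eexists; exact: cvF.
Qed.

End exhaustion.

Section singular_integrals.
Context {R : realType}.
Notation mu := (@lebesgue_measure R).

Lemma ge0_integral_itvcc_le_right_cuts (f : R -> R) (a b M : R) : a < b ->
  measurable_fun `[a, b[ f -> (forall x, a <= x < b -> 0 <= f x) ->
  (forall x, a < x < b -> (\int[mu]_(t in `[a, x]) (f t)%:E <= M%:E)%E) ->
  (\int[mu]_(t in `[a, b]) (f t)%:E <= M%:E)%E.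
Proof.
move=> ab mf f0 fM.
have mfE : measurable_fun `[a, b[ (EFin \o f) by exact/measurable_EFinP.
rewrite -integral_itv_bndo_bndc // (itv_bnd_open_bigcup true a b).
have cut_sub n : `[a, b - n.+1%:R^-1] `<=` `[a, b[.
  by apply: subset_itvl; rewrite bnd_simp ltrBlDr ltrDl invr_gt0 ltr0n.
apply: ge0_nondecreasing_set_integral_le => //.
- apply/nondecreasing_seqP => n; rewrite subsetEset; apply: subset_itvl.
  by rewrite bnd_simp lerD2l lerN2 lef_pV2 ?posrE ?ltr0n // ler_nat.
- by move=> n; exact: measurable_funS (cut_sub n) mfE.
- by move=> n x /cut_sub; rewrite /= in_itv /= lee_fin => /f0.
have ba : 0 < b - a by rewrite subr_gt0.
near=> n; apply: fM; rewrite ltrBrDl -ltrBrDr ltrBlDr ltrDl invr_gt0 ltr0n andbT.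
near: n; exact: (near_infty_natSinv_lt (PosNum ba)).
Unshelve. all: by end_near.
Qed.

Lemma ge0_integral_itvcc_le_left_cuts (f : R -> R) (a b M : R) : a < b ->
  measurable_fun `]a, b] f -> (forall x, a < x <= b -> 0 <= f x) ->
  (forall x, a < x < b -> (\int[mu]_(t in `[x, b]) (f t)%:E <= M%:E)%E) ->
  (\int[mu]_(t in `[a, b]) (f t)%:E <= M%:E)%E.
Proof.
move=> ab mf f0 fM.
have mfE : measurable_fun `]a, b] (EFin \o f) by exact/measurable_EFinP.
rewrite -integral_itv_obnd_cbnd // (itv_open_bnd_bigcup false b a).
have cut_sub n : `[a + n.+1%:R^-1, b] `<=` `]a, b].
  by apply: subset_itvr; rewrite bnd_simp ltrDl invr_gt0 ltr0n.
apply: ge0_nondecreasing_set_integral_le => //.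
- apply/nondecreasing_seqP => n; rewrite subsetEset; apply: subset_itvr.
  by rewrite bnd_simp lerD2l lef_pV2 ?posrE ?ltr0n // ler_nat.
- by move=> n; exact: measurable_funS (cut_sub n) mfE.
- by move=> n x /cut_sub; rewrite /= in_itv /= lee_fin => /f0.
have ba : 0 < b - a by rewrite subr_gt0.
near=> n; apply: fM; rewrite ltrDl invr_gt0 ltr0n -ltrBrDl.
near: n; exact: (near_infty_natSinv_lt (PosNum ba)).
Unshelve. all: by end_near.
Qed.

Lemma continuous_FTC2_cc (f F : R -> R) (a b : R) : a < b ->
  (forall x, a <= x <= b -> is_derive x 1 F (f x)) ->
  (forall x, a <= x <= b -> {for x, continuous f}) ->
  (\int[mu]_(x in `[a, b]) (f x)%:E = (F b - F a)%:E)%E.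
Proof.
move=> ab dF cf; rewrite EFinB; apply: continuous_FTC2 => //.
- apply: continuous_in_subspaceT => x; rewrite inE /= in_itv /=; exact: cf.
- have cF x : a <= x <= b -> {for x, continuous F}.
    move=> xab; apply: differentiable_continuous; apply/derivable1_diffP.
    by have [] := dF x xab.
  split.
  + move=> x; rewrite in_itv /= => /andP[ax xb].
    by case: (dF x); rewrite ?(ltW ax) ?(ltW xb).
  + by apply: cvg_at_right_filter; apply: cF; rewrite lexx ltW.
  + by apply: cvg_at_left_filter; apply: cF; rewrite lexx ltW.
- move=> x; rewrite in_itv /= => /andP[ax xb].
  by rewrite derive1E; case: (dF x); rewrite ?(ltW ax) ?(ltW xb).
Qed.

Lemma continuous_powR (p x : R) : 0 < x -> {for x, continuous (@powR R ^~ p)}.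
Proof.
move=> x0; apply: differentiable_continuous; apply/derivable1_diffP.
by apply: derivable_powR; rewrite in_itv /= x0.
Qed.

Lemma integral_powRN_itv01_le (al : R) : al < 1 ->
  (\int[mu]_(t in `[0%R, 1%R]) (t `^ (- al))%:E <= ((1 - al)^-1)%:E)%E.
Proof.
move=> al1; have al1' : 1 - al != 0 by rewrite subr_eq0 gt_eqF.
apply: ge0_integral_itvcc_le_left_cuts => //.
- exact: measurable_funS (measurable_powR _).
- by move=> x _; exact: powR_ge0.
move=> x /andP[x0 x1].
have dF t : x <= t <= 1 ->
    is_derive t 1 (fun t => (1 - al)^-1 * t `^ (1 - al)) (t `^ (- al)).
  move=> /andP[xt _]; have t0 : 0 < t by exact: lt_le_trans xt.
  have := is_deriveZ ((1 - al)^-1) (is_derive1_powR (1 - al) t0).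
  by rewrite /GRing.scale /= mulrA mulVf // mul1r (_ : 1 - al - 1 = - al) //; ring.
have cf t : x <= t <= 1 -> {for t, continuous (@powR R ^~ (- al))}.
  by move=> /andP[xt _]; apply: continuous_powR; exact: lt_le_trans xt.
rewrite (continuous_FTC2_cc x1 dF cf) lee_fin powR1 mulr1 lerBlDr lerDl.
by rewrite mulr_ge0 ?powR_ge0 // invr_ge0 subr_ge0 ltW.
Qed.

Lemma integral_onem_powRN_le (al c : R) : al < 1 -> c < 1 ->
  (\int[mu]_(s in `[c, 1%R]) ((1 - s) `^ (- al))%:E <=
     ((1 - al)^-1 * (1 - c) `^ (1 - al))%:E)%E.
Proof.
move=> al1 c1; have al1' : 1 - al != 0 by rewrite subr_eq0 gt_eqF.
apply: ge0_integral_itvcc_le_right_cuts => //.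
- apply: measurable_funTS; apply: measurableT_comp (measurable_powR _) _.
  exact: measurable_funB.
- by move=> x _; exact: powR_ge0.
move=> x /andP[cx x1].
have dF t : c <= t <= x -> is_derive t 1
    (fun t => - ((1 - al)^-1 * (1 - t) `^ (1 - al))) ((1 - t) `^ (- al)).
  move=> /andP[_ tx]; have t1 : 0 < 1 - t by rewrite subr_gt0 (le_lt_trans tx).
  have d1 : is_derive t 1 (fun s : R => 1 - s) (0 - 1) by exact: is_deriveB.
  have := is_deriveZ (- (1 - al)^-1)
    (@is_derive1_comp _ (@powR R ^~ (1 - al)) (fun s => 1 - s) _ _ _
      (is_derive1_powR (1 - al) t1) d1).
  rewrite /GRing.scale /= sub0r mulrN1 mulrN mulNr opprK mulrA mulVf // mul1r.
  rewrite (_ : 1 - al - 1 = - al); last by ring.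
  congr is_derive; apply/funext => y.
  by rewrite /= -mulNr.
have cf t : c <= t <= x -> {for t, continuous (fun t : R => (1 - t) `^ (- al))}.
  move=> /andP[_ tx]; have t1 : 0 < 1 - t by rewrite subr_gt0 (le_lt_trans tx).
  apply: (@continuous_comp _ _ _ (fun s : R => 1 - s) (@powR R ^~ (- al))).
    by apply: continuousB => //; exact: cvg_cst.
  exact: continuous_powR.
rewrite (continuous_FTC2_cc cx dF cf) lee_fin opprK addrC lerBlDr lerDl.
by rewrite mulr_ge0 ?powR_ge0 // invr_ge0 subr_ge0 ltW.
Qed.

End singular_integrals.

Section Gamma_bounds.
Context {R : realType}.
Notation mu := (@lebesgue_measure R).

Lemma measurable_Gamma_integrand (al : R) :
  measurable_fun setT (fun t : R => t `^ (- al) * expR (- t)).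
Proof.
apply: measurable_funM; first exact: measurable_powR.
by apply: measurableT_comp; [exact: measurable_expR|].
Qed.

Lemma Gamma_integral_ge (al : R) : 0 <= al ->
  ((expR (-1))%:E <= \int[mu]_(t in `[0%R, +oo[) (t `^ (- al) * expR (- t))%:E)%E.
Proof.
move=> al0; have mh := measurable_Gamma_integrand al.
apply: (@le_trans _ _ (\int[mu]_(t in `]0%R, 1%R]) (expR (-1))%:E)%E).
  rewrite integral_cst //.
  have := @lebesgue_measure_itv R `]0%R, 1%R]; rewrite /= lte_fin ltr01 sube0.
  by move=> mE; rewrite [X in (_ * X)%E]mE mule1.
apply: (@le_trans _ _ (\int[mu]_(t in `]0%R, 1%R]) (t `^ (- al) * expR (- t))%:E)%E).
  apply: ge0_le_integral => //.
  - by apply/measurable_EFinP; exact: measurable_funTS.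
  move=> t /=; rewrite in_itv /= => /andP[t0 t1]; rewrite lee_fin.
  rewrite -[leLHS]mul1r ler_pM ?expR_ge0 ?ler_expR ?lerN2 //.
  by rewrite -(powRr0 t) ger_powR ?t0 // oppr_le0.
apply: ge0_subset_integral => //.
- by apply/measurable_EFinP; exact: measurable_funTS.
- by move=> t _; rewrite lee_fin mulr_ge0 ?powR_ge0 ?expR_ge0.
- by move=> t /=; rewrite !in_itv /= => /andP[/ltW -> _].
Qed.

Lemma Gamma_integral_le (al : R) : 0 <= al -> al < 1 ->
  (\int[mu]_(t in `[0%R, +oo[) (t `^ (- al) * expR (- t))%:E <=
     ((1 - al)^-1 + 1)%:E)%E.
Proof.
move=> al0 al1.
pose g : R -> \bar R := (fun t : R => (t `^ (- al))%:E) \_ `[0%R, 1%R].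
have mg : measurable_fun (`[0%R, +oo[ : set R) g.
  apply: measurable_funTS; apply/(measurable_restrictT _ _).1 => //.
  by apply: measurable_funTS; apply/measurable_EFinP; exact: measurable_powR.
have mexp : measurable_fun (`[0%R, +oo[ : set R) (fun t : R => (expR (- t))%:E).
  by apply/measurable_EFinP; apply: measurableT_comp; [exact: measurable_expR|].
apply: (@le_trans _ _ (\int[mu]_(t in `[0%R, +oo[) (g t + (expR (- t))%:E))%E).
  apply: ge0_le_integral => //.
  - by move=> t _; rewrite lee_fin mulr_ge0 ?powR_ge0 ?expR_ge0.
  - by apply/measurable_EFinP; apply: measurable_funTS; exact: measurable_Gamma_integrand.
  - exact: emeasurable_funD.
  move=> t /=; rewrite in_itv /= andbT => t0; rewrite /g patchE.
  have [t1|t1] := leP t 1.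
  + rewrite mem_set /= ?in_itv /= ?t0 ?t1 // -EFinD lee_fin.
    apply: (@le_trans _ _ (t `^ (- al))); last by rewrite lerDl expR_ge0.
    by rewrite -[leRHS]mulr1 ler_pM ?powR_ge0 ?expR_ge0 // expR_le1 oppr_le0.
  + rewrite memNset /=; last by rewrite in_itv /= => /andP[_]; rewrite leNgt t1.
    rewrite add0e lee_fin.
    rewrite -[leRHS]mul1r ler_pM ?powR_ge0 ?expR_ge0 //.
    by rewrite -(powRr0 t) ler_powR ?(ltW t1) // oppr_le0.
rewrite ge0_integralD //; last first.
  by move=> t _; rewrite /g patchE; case: ifPn => // _; rewrite lee_fin powR_ge0.
rewrite EFinD; apply: leeD.
  rewrite /g -integral_mkcondr setIidr; first exact: integral_powRN_itv01_le.
  by move=> t /=; rewrite !in_itv /= => /andP[-> _].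
rewrite -(integral_exponential_pdf ltr01).
rewrite (@eq_integral _ _ _ mu _ (fun t => (exponential_pdf 1 t)%:E)); last first.
  move=> t; rewrite inE /= in_itv /= andbT => t0.
  by rewrite exponential_pdfE // mul1r mulN1r.
apply: ge0_subset_integral => //.
- by apply/measurable_EFinP; exact: measurable_exponential_pdf.
- by move=> t _; rewrite lee_fin exponential_pdf_ge0.
Qed.

Lemma fine_bounds (x : \bar R) (a b : R) :
  (a%:E <= x <= b%:E)%E -> a <= fine x <= b.
Proof. by case: x => [r| |] /andP[] //; rewrite !lee_fin => -> ->. Qed.

Lemma GammaR_onem_bounds (al : R) : 0 <= al -> al < 1 ->
  expR (-1) <= GammaR (1 - al) <= (1 - al)^-1 + 1.
Proof.
move=> al0 al1; rewrite /GammaR /Rintegral (_ : 1 - al - 1 = - al); last by ring.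
by apply: fine_bounds; rewrite Gamma_integral_ge // Gamma_integral_le.
Qed.

End Gamma_bounds.

Section kernel.
Context {R : realType}.

Lemma onem_powR_le (r p : R) : 0 < r -> 0 <= p -> 1 - r `^ p <= p * (r^-1 - 1).
Proof.
move=> r0 p0.
have lnV_le : - ln r <= r^-1 - 1.
  rewrite -lnV ?posrE // -[X in ln X](addrNK 1) addrC le_ln1Dx //.
  by rewrite ltrBrDl subrr invr_gt0.
have <- : expR (p * ln r) = r `^ p by rewrite -ln_powR lnK ?posrE ?powR_gt0.
have := expR_ge1Dx (p * ln r).
have : p * - ln r <= p * (r^-1 - 1) by rewrite ler_wpM2l.
rewrite mulrN; lra.
Qed.

Variables (al m : R).

Definition Kcut (z u : R) : R := ((1 - z) / (1 - u)) `^ (1 / al).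

Definition Kintegrand (z u s : R) : R :=
  Fker al m z (1 - s `^ al * (1 - u)) * (1 - s) `^ (- al) * s `^ (al / m + al).

Lemma KkerE z u : Kker al m z u =
  (GammaR (1 - al))^-1 * Rintegral lebesgue_measure `[Kcut z u, 1] (Kintegrand z u).
Proof. by []. Qed.

Lemma Kcut_bounds X z u : 0 < al -> X < 1 -> 0 <= u -> u <= z -> z <= X ->
  (1 - X) `^ (1 / al) <= Kcut z u <= 1.
Proof.
move=> al0 X1 u0 uz zX.
have ratio_gt0 : 0 < (1 - z) / (1 - u) by rewrite divr_gt0 //; lra.
have r1 : (1 - z) / (1 - u) <= 1 by rewrite ler_pdivrMr ?mul1r; lra.
have a0 : 0 <= 1 / al by rewrite divr_ge0 // ltW.
apply/andP; split; last first.
  apply: (@le_trans _ _ (1 `^ (1 / al))); last by rewrite powR1.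
  by apply: ge0_ler_powR; rewrite ?nnegrE // ltW.
apply: ge0_ler_powR; rewrite ?nnegrE ?(ltW ratio_gt0) //; first lra.
rewrite ler_pdivlMr; last lra.
nra.
Qed.

Lemma onem_Kcut_bounds X z u : 0 < al -> al < 1 -> X < 1 ->
  0 <= u -> u <= z -> z <= X -> z - u <= 1 - Kcut z u <= (z - u) / (al * (1 - X)).
Proof.
move=> al0 al1 X1 u0 uz zX.
have ratio_gt0 : 0 < (1 - z) / (1 - u) by rewrite divr_gt0 //; lra.
set r := (1 - z) / (1 - u).
have r1 : r <= 1 by rewrite ler_pdivrMr ?mul1r; lra.
apply/andP; split.
  have cr : Kcut z u <= r.
    by apply: ge1r_powR; rewrite ?ratio_gt0 ?r1 // ler_pdivlMr // mul1r ltW.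
  have : z - u <= 1 - r.
    have -> : 1 - r = (z - u) / (1 - u) by rewrite /r; field; lra.
    rewrite ler_pdivlMr; nra.
  lra.
apply: (le_trans (onem_powR_le ratio_gt0 _)); first by rewrite divr_ge0 ?ltW.
rewrite /r invf_div (_ : (1 - u) / (1 - z) - 1 = (z - u) / (1 - z)); last first.
  by field; lra.
have -> : (z - u) / (al * (1 - X)) = 1 / al * ((z - u) / (1 - X)).
  by field; rewrite gt_eqF //; lra.
apply: ler_wpM2l; first by rewrite divr_ge0 ?ltW.
apply: ler_wpM2l; first lra.
by rewrite lef_pV2 ?posrE; lra.
Qed.

Lemma Fker_onem_bounds X z w : 0 < al -> 1 < m -> X < 1 -> z <= X ->
  1 - z <= w -> w <= 1 ->
  (m + 1) * al * (1 - X) <= Fker al m z (1 - w) <= (m + 1) * (1 + 2 * al).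
Proof.
move=> al0 m1 X1 zX zw w1; rewrite /Fker.
have q01 : 0 <= (m - 1) / m <= 1.
  by rewrite divr_ge0 ?ler_pdivrMr ?mul1r /=; lra.
move: q01; set q := (m - 1) / m => /andP[q0 q1].
have AB1 : 1 <= 1 - q * al + al by nra.
rewrite -mulrA; apply/andP; split; rewrite ler_pM2l; nra.
Qed.

Lemma Kcut_powR_bounds z u s : 0 < al -> 0 <= u -> u <= z -> z < 1 ->
  Kcut z u <= s -> s <= 1 -> 1 - z <= s `^ al * (1 - u) <= 1.
Proof.
move=> al0 u0 uz z1 cs s1.
have u1 : 0 < 1 - u by lra.
have r0 : 0 < (1 - z) / (1 - u) by rewrite divr_gt0 //; lra.
have s0 : 0 <= s by exact: le_trans (powR_ge0 _ _) cs.
have sa1 : s `^ al <= 1.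
  by have := @ge0_ler_powR R al (ltW al0) s 1; rewrite !nnegrE powR1; apply.
apply/andP; split; last by have := powR_ge0 s al; nra.
have cE : Kcut z u `^ al = (1 - z) / (1 - u).
  by rewrite /Kcut -powRrM mul1r mulVf ?gt_eqF // powRr1 // ltW.
rewrite -ler_pdivrMr // -cE.
by apply: ge0_ler_powR; rewrite ?nnegrE ?powR_ge0 //; exact: ltW.
Qed.

Lemma measurable_Kintegrand z u : measurable_fun setT (Kintegrand z u).
Proof.
have monem : measurable_fun setT (fun s : R => 1 - s).
  by apply: measurable_funB; [exact: measurable_cst | exact: measurable_id].
apply: measurable_funM; last exact: measurable_powR.
apply: measurable_funM; last exact: measurableT_comp (measurable_powR _) monem.
apply: measurableT_comp; last first.
  apply: measurable_funB; first exact: measurable_cst.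
  by apply: measurable_funM; [exact: measurable_powR | exact: measurable_cst].
apply: measurable_funM; first exact: measurable_cst.
by apply: measurable_funD; apply: measurable_funM => //; exact: measurable_funB.
Qed.

(* [lra] ignores section hypotheses, hence the [move: ...] before it below. *)
Section Kintegrand_bounds.
Variables (X z u s : R).
Hypotheses (al0 : 0 < al) (al1 : al < 1) (m1 : 1 < m) (X1 : X < 1).
Hypotheses (u0 : 0 <= u) (uz : u <= z) (zX : z <= X).
Hypotheses (cs : Kcut z u <= s) (s1 : s <= 1).

Let Fker_bounds : (m + 1) * al * (1 - X) <= Fker al m z (1 - s `^ al * (1 - u))
  <= (m + 1) * (1 + 2 * al).
Proof.
have /andP[zw w1] := Kcut_powR_bounds al0 u0 uz (le_lt_trans zX X1) cs s1.
exact: Fker_onem_bounds.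
Qed.

Let FL_ge0 : 0 <= (m + 1) * al * (1 - X).
Proof. by move: al0 m1 X1 => *; rewrite !mulr_ge0 //; lra. Qed.

Lemma Kintegrand_ge0 : 0 <= Kintegrand z u s.
Proof.
have /andP[FL _] := Fker_bounds.
rewrite /Kintegrand; apply: mulr_ge0; last exact: powR_ge0.
by apply: mulr_ge0; [exact: le_trans FL | exact: powR_ge0].
Qed.

Lemma Kintegrand_le : Kintegrand z u s <= (m + 1) * (1 + 2 * al) * (1 - s) `^ (- al).
Proof.
have /andP[FL FH] := Fker_bounds.
have s0 : 0 <= s by exact: le_trans (powR_ge0 _ _) cs.
have sp1 : s `^ (al / m + al) <= 1.
  have p0 : 0 <= al / m + al.
    by move: al0 m1 => *; rewrite addr_ge0 ?divr_ge0 //; lra.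
  by have := @ge0_ler_powR R _ p0 s 1; rewrite !nnegrE powR1; apply.
rewrite /Kintegrand -[leRHS]mulr1; apply: ler_pM; rewrite ?powR_ge0 //.
- by rewrite mulr_ge0 ?powR_ge0 //; exact: le_trans FL.
- by apply: ler_pM; rewrite ?powR_ge0 //; exact: le_trans FL.
Qed.

Lemma Kintegrand_ge : s < 1 -> (m + 1) * al * (1 - X) * (1 - Kcut z u) `^ (- al) *
  ((1 - X) `^ (1 / al)) `^ (al / m + al) <= Kintegrand z u s.
Proof.
move=> s1'.
have /andP[FL _] := Fker_bounds.
have /andP[c0c _] := Kcut_bounds al0 X1 u0 uz zX.
have p0 : 0 <= al / m + al by move: al0 m1 => *; rewrite addr_ge0 ?divr_ge0 //; lra.
rewrite /Kintegrand; apply: ler_pM; rewrite ?powR_ge0 //.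
- by rewrite mulr_ge0 ?powR_ge0.
- apply: ler_pM; rewrite ?powR_ge0 // !powRN lef_pV2 ?posrE ?powR_gt0 ?subr_gt0 //.
  + apply: ge0_ler_powR; rewrite ?nnegrE ?subr_ge0 ?lerD2l ?lerN2 //.
      exact: ltW.
    exact: le_trans cs s1.
  + exact: le_lt_trans cs s1'.
- apply: ge0_ler_powR; rewrite ?nnegrE ?powR_ge0 ?(le_trans c0c cs) //.
  exact: le_trans (powR_ge0 _ _) cs.
Qed.

End Kintegrand_bounds.

Section Kintegral_bounds.
Variables (X z u : R).
Hypotheses (al0 : 0 < al) (al1 : al < 1) (m1 : 1 < m) (X1 : X < 1).
Hypotheses (u0 : 0 <= u) (uz : u <= z) (zX : z <= X).
Notation mu := (@lebesgue_measure R).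

Let mK : measurable_fun setT (fun s => (Kintegrand z u s)%:E).
Proof. by apply/measurable_EFinP; exact: measurable_Kintegrand. Qed.

Lemma Kintegral_ge :
  (((m + 1) * al * (1 - X) * ((1 - X) `^ (1 / al)) `^ (al / m + al) *
     (1 - Kcut z u) `^ (1 - al))%:E <=
  \int[mu]_(s in `[Kcut z u, 1%R]) (Kintegrand z u s)%:E)%E.
Proof.
have /andP[_ c1] := Kcut_bounds al0 X1 u0 uz zX.
have [->|c1'] := eqVneq (Kcut z u) 1.
  by rewrite set_itv1 integral_set1 subrr powR0 ?mulr0 // subr_eq0 gt_eqF.
have {c1 c1'} c1 : Kcut z u < 1 by rewrite lt_neqAle c1' c1.
pose K := (m + 1) * al * (1 - X) * (1 - Kcut z u) `^ (- al) *
  ((1 - X) `^ (1 / al)) `^ (al / m + al).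
apply: (@le_trans _ _ (\int[mu]_(s in `[Kcut z u, 1%R[) K%:E)%E).
  rewrite integral_cst //.
  have := @lebesgue_measure_itv R `[Kcut z u, 1%R[; rewrite /= lte_fin c1.
  have d0 : 0 < 1 - Kcut z u by rewrite subr_gt0.
  have dE : (1 - Kcut z u) `^ (1 - al) = (1 - Kcut z u) `^ (- al) * (1 - Kcut z u).
    rewrite -[X in _ * X](powRr1 (ltW d0)) -powRD; first by congr (_ `^ _); ring.
    by apply/implyP => _; rewrite gt_eqF.
  have -> : (m + 1) * al * (1 - X) * ((1 - X) `^ (1 / al)) `^ (al / m + al) *
      (1 - Kcut z u) `^ (1 - al) = K * (1 - Kcut z u) by rewrite dE /K; ring.
  by move=> ->; rewrite -EFinD -EFinM lexx.
apply: (@le_trans _ _ (\int[mu]_(s in `[Kcut z u, 1%R[) (Kintegrand z u s)%:E)%E).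
  apply: ge0_le_integral => //.
  - by move=> s _; rewrite lee_fin /K; move: al0 m1 X1 => *; rewrite !mulr_ge0 ?powR_ge0 //; lra.
  - exact: measurable_funTS.
  move=> s /=; rewrite in_itv /= => /andP[cs s1]; rewrite lee_fin.
  by apply: Kintegrand_ge => //; exact: ltW.
apply: ge0_subset_integral => //.
- exact: measurable_funTS.
- move=> s /=; rewrite in_itv /= => /andP[cs s1]; rewrite lee_fin.
  exact: (@Kintegrand_ge0 X).
- by apply: subset_itvl; rewrite bnd_simp.
Qed.

Lemma Kintegral_le :
  (\int[mu]_(s in `[Kcut z u, 1%R]) (Kintegrand z u s)%:E <=
  ((m + 1) * (1 + 2 * al) * ((1 - al)^-1 * (1 - Kcut z u) `^ (1 - al)))%:E)%E.
Proof.
have FH0 : 0 <= (m + 1) * (1 + 2 * al) by move: al0 m1 => *; rewrite mulr_ge0 //; lra.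
have /andP[_ c1] := Kcut_bounds al0 X1 u0 uz zX.
have [->|c1'] := eqVneq (Kcut z u) 1.
  rewrite set_itv1 integral_set1 lee_fin subrr powR0 ?mulr0 ?mulr0 //.
  by rewrite subr_eq0 gt_eqF.
have {c1 c1'} c1 : Kcut z u < 1 by rewrite lt_neqAle c1' c1.
have monem : measurable_fun setT (fun s : R => ((1 - s) `^ (- al))%:E).
  apply/measurable_EFinP; apply: measurableT_comp (measurable_powR _) _.
  by apply: measurable_funB; [exact: measurable_cst | exact: measurable_id].
apply: (@le_trans _ _ (\int[mu]_(s in `[Kcut z u, 1%R])
    (((m + 1) * (1 + 2 * al))%:E * ((1 - s) `^ (- al))%:E))%E).
  apply: ge0_le_integral => //.
  - move=> s /=; rewrite in_itv /= => /andP[cs s1]; rewrite lee_fin.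
    exact: (@Kintegrand_ge0 X).
  - exact: measurable_funTS.
  - by apply: emeasurable_funM => //; exact: measurable_funTS.
  move=> s /=; rewrite in_itv /= => /andP[cs s1]; rewrite -EFinM lee_fin.
  exact: (@Kintegrand_le X).
rewrite ge0_integralZl_EFin //; first last.
- exact: measurable_funTS.
- by move=> s _; rewrite lee_fin powR_ge0.
rewrite (EFinM ((m + 1) * (1 + 2 * al))); apply: lee_wpmul2l; first by rewrite lee_fin.
exact: integral_onem_powRN_le.
Qed.

Lemma Rintegral_Kintegrand_bounds :
  (m + 1) * al * (1 - X) * ((1 - X) `^ (1 / al)) `^ (al / m + al) *
    (1 - Kcut z u) `^ (1 - al) <=
  Rintegral mu `[Kcut z u, 1] (Kintegrand z u) <=
  (m + 1) * (1 + 2 * al) * ((1 - al)^-1 * (1 - Kcut z u) `^ (1 - al)).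
Proof. by apply: fine_bounds; rewrite Kintegral_ge Kintegral_le. Qed.

End Kintegral_bounds.

Lemma Rintegral_Kintegrand_comparable X : 0 < al -> al < 1 -> 1 < m -> X < 1 ->
  exists cL cU : R, 0 < cL /\ cL <= cU /\
    forall z u, 0 <= u -> u <= z -> z <= X ->
      cL * (z - u) `^ (1 - al) <= Rintegral lebesgue_measure `[Kcut z u, 1] (Kintegrand z u)
      <= cU * (z - u) `^ (1 - al).
Proof.
move=> al0 al1 m1 X1.
set cL := (m + 1) * al * (1 - X) * ((1 - X) `^ (1 / al)) `^ (al / m + al).
set cU := (m + 1) * (1 + 2 * al) * (1 - al)^-1 * (al * (1 - X))^-1 `^ (1 - al).
have cL0 : 0 < cL by rewrite /cL !mulr_gt0 ?powR_gt0 //; lra.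
exists cL, (Num.max cL cU); split => //; split; first by rewrite le_max lexx.
move=> z u u0 uz zX.
have /andP[dl dh] := onem_Kcut_bounds al0 al1 X1 u0 uz zX.
have /andP[Il Iu] := Rintegral_Kintegrand_bounds al0 al1 m1 X1 u0 uz zX.
have al1' : 0 <= 1 - al by lra.
apply/andP; split.
  apply: le_trans Il; rewrite ler_wpM2l ?(ltW cL0) //.
  by apply: ge0_ler_powR; rewrite ?nnegrE //; lra.
apply: (le_trans Iu); apply: (@le_trans _ _ (cU * (z - u) `^ (1 - al))); last first.
  by rewrite ler_wpM2r ?powR_ge0 // le_max lexx orbT.
rewrite /cU mulrA -!mulrA.
do 3 (apply: ler_wpM2l; first by rewrite ?invr_ge0; lra).
rewrite -powRM ?invr_ge0 ?mulr_ge0 //; try lra.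
apply: ge0_ler_powR; rewrite ?nnegrE ?mulr_ge0 ?invr_ge0 //; [lra | nra | lra | by rewrite mulrC].
Qed.

End kernel.

Theorem mainTheorem2 (R : realType) (al m X : R) :
  0 < al -> al < 1 -> 1 < m -> 0 < X -> X < 1 ->
  exists Km Kp : R, 0 < Km /\ Km <= Kp /\
    (forall z u : R, 0 <= u -> u <= z -> z <= X ->
       Km * (z - u) `^ (1 - al) <= Kker al m z u /\
       Kker al m z u <= Kp * (z - u) `^ (1 - al)).
Proof.
move=> al0 al1 m1 _ X1.
have /andP[Glo Ghi] := GammaR_onem_bounds (ltW al0) al1.
have G0 : 0 < GammaR (1 - al) := lt_le_trans (expR_gt0 _) Glo.
have Gm1 : 1 <= (1 - al)^-1 + 1 by rewrite lerDr invr_ge0; lra.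
have [cL [cU [cL0 [cLU Ibnd]]]] := Rintegral_Kintegrand_comparable al0 al1 m1 X1.
exists (cL / ((1 - al)^-1 + 1)), (expR 1 * cU); split; [|split].
- by rewrite divr_gt0 //; lra.
- rewrite ler_pdivrMr; last lra.
  have e1 : 1 <= expR 1 :> R by rewrite -expR0 ler_expR.
  rewrite -[leLHS]mulr1 ler_pM //; first exact: ltW.
  by apply: (le_trans cLU); rewrite ler_peMl // (le_trans (ltW cL0) cLU).
move=> z u u0 uz zX; have /andP[Il Iu] := Ibnd z u u0 uz zX.
have P0 : 0 <= (z - u) `^ (1 - al) by exact: powR_ge0.
rewrite KkerE; split.
- rewrite mulrAC mulrC; apply: ler_pM; rewrite ?mulr_ge0 ?invr_ge0 ?(ltW cL0) //.
  + by apply: (le_trans _ Gm1).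
  + by rewrite lef_pV2 ?posrE //; apply: (lt_le_trans _ Gm1).
- rewrite -mulrA; apply: ler_pM; rewrite ?invr_ge0 ?(ltW G0) //.
  + exact: le_trans (mulr_ge0 (ltW cL0) P0) Il.
  + by rewrite -[leRHS]invrK -expRN lef_pV2 ?posrE ?expR_gt0.
Qed.
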